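(* Let $A$ be the matrix described in the context. Diffusion occurs from a small seed if and only if the largest eigenvalue $\mu$ of $A$ (its Perron root) satisfies $\mu>1$.
   Context: There are $m\ge1$ types. $\Pi=(\pi_{ij})$ is a nonnegative row-stochastic $m\times m$ matrix ($\pi_{ij}$ is the probability that a meeting of a type-$i$ agent is with a type-$j$ agent) which is primitive (some power has all entries strictly positive). For each type $i$: $P_i$ is a degree distribution on the nonnegative integers; $w_i(d)>0$ are degree weights for $d$ with $P_i(d)>0$; $f_i(d,a)$, $g_i(d,a)$ ($0\le a\le d$) are the adoption and abandonment rates of a type-$i$, degree-$d$ agent meeting $a$ adopters, satisfying: $f_i(d,0)=0$; $f_i(d,a)$ nondecreasing in $a$; $f_i(d,1)>0$ for some $d$ with $P_i(d)>0$; $g_i(d,0)>0$; $g_i(d,a)$ nonincreasing in $a$. Let $x_i=\sum_dP_i(d)w_i(d)\,d\,\frac{f_i(d,1)}{g_i(d,0)}$, assumed finite; it is positive. $A$ is the $m\times m$ matrix with $A_{ij}=\pi_{ij}x_j$ (the linearization at zero of the steady-state map for the probabilities of meeting an adopter). Diffusion occurs from a small seed means: for every $\varepsilon>0$ there exists $v\in\mathbb{R}^m$ with $0<v_i<\varepsilon$ and $(Av)_i>v_i$ for all $i$. *)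

From mathcomp Require Import all_boot all_order all_algebra.
From mathcomp Require Import all_classical all_reals all_analysis.
From mathcomp Require Import complex.
Set Implicit Arguments. Unset Strict Implicit. Unset Printing Implicit Defensive.
Import Order.TTheory GRing.Theory Num.Theory.
Import numFieldNormedType.Exports.
Local Open Scope ring_scope.
Local Open Scope complex_scope.

Definition x_term (R : realType) (m : nat) (P w : 'I_m -> nat -> R)
  (f g : 'I_m -> nat -> nat -> R) (i : 'I_m) (d : nat) : R :=
  P i d * w i d * d%:R * f i d 1%N / g i d 0%N.

Definition x_val (R : realType) (m : nat) (P w : 'I_m -> nat -> R)
  (f g : 'I_m -> nat -> nat -> R) (i : 'I_m) : R :=
  limn (series (x_term P w f g i)).

Definition A_mat (R : realType) (n : nat) (Pi : 'M[R]_n.+1)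
  (x : 'I_n.+1 -> R) : 'M[R]_n.+1 :=
  \matrix_(i, j) (Pi i j * x j).

Definition small_seed_diffusion (R : realType) (n : nat) (A : 'M[R]_n.+1) : Prop :=
  forall eps : R, 0 < eps ->
    exists v : 'cV[R]_n.+1,
      forall i, 0 < v i 0 /\ v i 0 < eps /\ (A *m v) i 0 > v i 0.

Definition perron_root (R : realType) (n : nat) (A : 'M[R]_n.+1) (mu : R) : Prop :=
  eigenvalue A mu /\
  forall z : R[i], eigenvalue (map_mx (fun r : R => r%:C) A) z -> `|z| <= mu%:C.

From mathcomp Require Import all_boot all_order all_algebra.
From mathcomp Require Import all_classical all_reals all_analysis.
From mathcomp Require Import complex lra.
Import Order.TTheory GRing.Theory Num.Theory.
Import numFieldNormedType.Exports.
Set Implicit Arguments. Unset Strict Implicit.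
Local Open Scope classical_set_scope.
Local Open Scope ring_scope.
Local Open Scope complex_scope.

(* For a nonnegative matrix B and any t above all real eigenvalues of B there
   is a positive vector y with B y < t y: such t form an upward closed set, and
   at its infimum s the vector (s - B)^-1 1 is still nonnegative by continuity,
   which produces such a y strictly below s.  A minimum principle then rules out
   a positive v with B v > t v, so a small growing seed (A v > v) forces
   1 < mu.  Conversely, if 1 < mu, the modulus |v| of a mu-eigenvector satisfies
   A |v| >= mu |v|; as A >= (min x) Pi and Pi is primitive, some A^k is
   positive, so A^k |v| is a positive vector with A y >= mu y > y, and scaling
   it down gives arbitrarily small seeds. *)

Lemma horner_char_poly_mx (R : comNzRingType) m (A : 'M[R]_m) a :
  map_mx (horner_eval a) (char_poly_mx A) = a%:M - A.
Proof.
by apply/matrixP => i j; rewrite !mxE /horner_eval !(hornerE, hornerMn).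
Qed.

Lemma horner_char_poly (R : comNzRingType) m (A : 'M[R]_m) a :
  (char_poly A).[a] = \det (a%:M - A).
Proof. by rewrite -horner_char_poly_mx det_map_mx. Qed.

Lemma horner_adj_char_poly_mx (R : comNzRingType) m (A : 'M[R]_m) a i j :
  (\adj (char_poly_mx A) i j).[a] = \adj (a%:M - A) i j.
Proof. by rewrite -horner_char_poly_mx -map_mx_adj [RHS]mxE. Qed.

Lemma eigenvalue_det (F : fieldType) m (A : 'M[F]_m) a :
  eigenvalue A a = (\det (a%:M - A) == 0).
Proof. by rewrite eigenvalue_root_char rootE horner_char_poly. Qed.

Lemma col_eigenvector (F : fieldType) m (A : 'M[F]_m) a :
  eigenvalue A a -> exists2 v : 'cV[F]_m, A *m v = a *: v & v != 0.
Proof.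
rewrite eigenvalue_det -det_tr linearB /= tr_scalar_mx -eigenvalue_det.
move=> /eigenvalueP[v vAt v_neq0]; exists v^T; last by rewrite trmx_eq0.
by rewrite -[A]trmxK -trmx_mul vAt linearZ.
Qed.

Section NonnegativeMatrices.
Variable R : realType.

Lemma exists_argmin (I : finType) (i0 : I) (F : I -> R) :
  exists j, forall i, F j <= F i.
Proof.
by case: (@arg_minP _ _ I i0 xpredT F isT) => j _ Fj; exists j => i; apply: Fj.
Qed.

Lemma exists_argmax (I : finType) (i0 : I) (F : I -> R) :
  exists j, forall i, F i <= F j.
Proof.
by case: (@arg_maxP _ _ I i0 xpredT F isT) => j _ Fj; exists j => i; apply: Fj.
Qed.

Lemma mulmx_ge0 m (B : 'M[R]_m) (y : 'cV[R]_m) i :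
  (forall i j, 0 <= B i j) -> (forall j, 0 <= y j 0) -> 0 <= (B *m y) i 0.
Proof.
by move=> B0 y0; rewrite mxE; apply: sumr_ge0 => j _; apply: mulr_ge0.
Qed.

Lemma ler_mulmx m (B : 'M[R]_m) (x y : 'cV[R]_m) i :
  (forall i j, 0 <= B i j) -> (forall j, x j 0 <= y j 0) ->
  (B *m x) i 0 <= (B *m y) i 0.
Proof.
by move=> B0 xy; rewrite !mxE; apply: ler_sum => j _; apply: ler_wpM2l.
Qed.

Lemma mxpow_ge0 m (B : 'M[R]_m.+1) k :
  (forall i j, 0 <= B i j) -> forall i j, 0 <= (B ^+ k) i j.
Proof.
move=> B0; elim: k => [|k IHk] i j; first by rewrite expr0 mxE; case: (i == j).
by rewrite exprSr -mulmxE mxE; apply: sumr_ge0 => l _; apply: mulr_ge0.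
Qed.

Lemma ler_mxpow m (P B : 'M[R]_m.+1) k :
  (forall i j, 0 <= P i j) -> (forall i j, P i j <= B i j) ->
  forall i j, (P ^+ k) i j <= (B ^+ k) i j.
Proof.
move=> P0 PB; elim: k => [|k IHk] i j; first by rewrite !expr0.
rewrite !exprSr -!mulmxE !mxE; apply: ler_sum => l _.
by apply: ler_pM => //; apply: mxpow_ge0.
Qed.

Lemma mxpow_gt0_of_ge_scale m (P B : 'M[R]_m.+1) c k :
  (forall i j, 0 <= P i j) -> 0 < c -> (forall i j, c * P i j <= B i j) ->
  (forall i j, 0 < (P ^+ k) i j) -> forall i j, 0 < (B ^+ k) i j.
Proof.
move=> P0 c_gt0 cPB Pk_gt0 i j.
have cP0 i' j' : 0 <= (c *: P) i' j' by rewrite mxE mulr_ge0 // ltW.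
apply: lt_le_trans (ler_mxpow k cP0 _ i j); last by move=> i' j'; rewrite mxE.
by rewrite exprZn mxE mulr_gt0 ?exprn_gt0.
Qed.

Lemma eigenvector_norm_le_mulmx m (B : 'M[R]_m) (v : 'cV[R]_m) a i :
  (forall i j, 0 <= B i j) -> B *m v = a *: v -> 0 <= a ->
  a * `|v i 0| <= (B *m map_mx Num.norm v) i 0.
Proof.
move=> B0 Bv a_ge0; rewrite -(ger0_norm a_ge0) -normrM.
have -> : a * v i 0 = (B *m v) i 0 by rewrite Bv mxE.
rewrite !mxE; apply: (le_trans (ler_norm_sum _ _ _)); apply: ler_sum => l _.
by rewrite normrM ger0_norm ?mxE.
Qed.

Lemma pos_supereigenvector n (B : 'M[R]_n.+1) k a :
  (forall i j, 0 <= B i j) -> (forall i j, 0 < (B ^+ k) i j) ->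
  eigenvalue B a -> 0 <= a ->
  exists2 w : 'cV[R]_n.+1,
    (forall i, 0 < w i 0) & (forall i, a * w i 0 <= (B *m w) i 0).
Proof.
move=> B0 Bk_gt0 /col_eigenvector[v Bv v_neq0] a_ge0.
pose u := map_mx Num.norm v.
have u_ge0 i : 0 <= u i 0 by rewrite mxE.
have /existsP[i0 v_i0] : [exists i, v i 0 != 0].
  apply: contraNT v_neq0 => /existsPn v0; apply/eqP/matrixP => i j.
  by rewrite (ord1 j) mxE; apply/eqP/negPn/v0.
exists (B ^+ k *m u) => i.
  rewrite mxE (bigD1 i0) //=; apply: ltr_wpDr; last first.
    by rewrite mulr_gt0 // mxE normr_gt0.
  by apply: sumr_ge0 => l _; rewrite mulr_ge0 ?u_ge0 // ltW.
have -> : B *m (B ^+ k *m u) = B ^+ k *m (B *m u).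
  by rewrite !mulmxA !mulmxE (commrX k (commr_refl B)).
have -> : a * (B ^+ k *m u) i 0 = (B ^+ k *m (a *: u)) i 0.
  by rewrite -scalemxAr [RHS]mxE.
apply: ler_mulmx => [|j]; first exact: mxpow_ge0.
by rewrite [leLHS]mxE [u _ _]mxE; apply: eigenvector_norm_le_mulmx.
Qed.

Definition strictly_subinvariant m (B : 'M[R]_m) t :=
  exists2 y : 'cV[R]_m,
    (forall i, 0 < y i 0) & (forall i, (B *m y) i 0 < t * y i 0).

(* A minimum principle: shift x by the least multiple of y making it
   nonnegative; at an index where the shifted vector vanishes, the left-hand
   side of the strict inequality is nonnegative and the right-hand side is 0. *)
Lemma subinvariant_ge0 m (B : 'M[R]_m) t (x : 'cV[R]_m) :
  (forall i j, 0 <= B i j) -> strictly_subinvariant B t ->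
  (forall i, (B *m x) i 0 <= t * x i 0) -> forall i, 0 <= x i 0.
Proof.
move=> B0 [y y_gt0 By] Bx i; rewrite leNgt; apply/negP => x_i.
have [j Hj] := exists_argmin i (fun k => x k 0 / y k 0).
have y_j := y_gt0 j.
set lam := - (x j 0 / y j 0).
have lam_gt0 : 0 < lam.
  by rewrite oppr_gt0 (le_lt_trans (Hj i)) // pmulr_llt0 ?invr_gt0.
pose z := x + lam *: y.
have z_ge0 k : 0 <= z k 0.
  by rewrite !mxE mulNr subr_ge0 -ler_pdivlMr ?y_gt0.
have z_j : z j 0 = 0 by rewrite !mxE mulNr -mulrA mulVf ?gt_eqF // mulr1 subrr.
have : (B *m z) j 0 < t * z j 0.
  rewrite mulmxDr -scalemxAr [ltLHS]mxE [X in _ + X]mxE.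
  rewrite [z _ _]mxE [X in _ * (_ + X)]mxE mulrDr.
  by apply: ler_ltD; [exact: Bx | rewrite mulrCA ltr_pM2l].
by rewrite z_j mulr0 ltNge (mulmx_ge0 _ B0 z_ge0).
Qed.

Lemma strictly_subinvariant_le m (B : 'M[R]_m) t u :
  strictly_subinvariant B t -> t <= u -> strictly_subinvariant B u.
Proof.
move=> [y y_gt0 By] tu; exists y => // i.
by apply: lt_le_trans (By i) _; rewrite ler_pM2r.
Qed.

Lemma strictly_subinvariant_gt0 n (B : 'M[R]_n.+1) t :
  (forall i j, 0 <= B i j) -> strictly_subinvariant B t -> 0 < t.
Proof.
move=> B0 [y y_gt0 By].
have := le_lt_trans (mulmx_ge0 ord0 B0 (fun j => ltW (y_gt0 j))) (By ord0).
by rewrite pmulr_lgt0.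
Qed.

Lemma strictly_subinvariant_entry_sum m (B : 'M[R]_m) :
  (forall i j, 0 <= B i j) -> strictly_subinvariant B (1 + \sum_i \sum_j B i j).
Proof.
move=> B0; exists (const_mx 1) => i; first by rewrite mxE.
rewrite mxE [X in _ < _ * X]mxE mulr1.
under eq_bigr do rewrite mxE mulr1.
rewrite ltr_pwDl // [leRHS](bigD1 i) //= lerDl.
by apply: sumr_ge0 => k _; apply: sumr_ge0.
Qed.

(* [(u - B)^-1 *m 1], written with the adjugate so that its entries are,
   up to the factor [\det (u - B)^2], polynomials in [u]. *)
Definition resolvent1 m (B : 'M[R]_m) u : 'cV[R]_m :=
  (\det (u%:M - B))^-1 *: (\adj (u%:M - B) *m const_mx 1).

Lemma mulmx_resolvent1 m (B : 'M[R]_m) u i : \det (u%:M - B) != 0 ->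
  (B *m resolvent1 B u) i 0 = u * resolvent1 B u i 0 - 1.
Proof.
move=> det_neq0; set r := resolvent1 B u.
have : ((u%:M - B) *m r) i 0 = 1.
  rewrite -scalemxAr mulmxA mul_mx_adj mul_scalar_mx scalerA mulVf //.
  by rewrite scale1r mxE.
have -> : ((u%:M - B) *m r) i 0 = u * r i 0 - (B *m r) i 0.
  by rewrite mulmxBl mul_scalar_mx [LHS]mxE [X in X + _]mxE [X in _ + X]mxE.
by move=> <-; rewrite opprB addrC subrK.
Qed.

Definition resolvent1_numer m (B : 'M[R]_m) i : {poly R} :=
  char_poly B * \sum_j \adj (char_poly_mx B) i j.

Lemma horner_resolvent1_numer m (B : 'M[R]_m) u i : \det (u%:M - B) != 0 ->
  (resolvent1_numer B i).[u] = \det (u%:M - B) ^+ 2 * resolvent1 B u i 0.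
Proof.
move=> det_neq0; rewrite hornerM horner_char_poly horner_sum !mxE.
rewrite expr2 -mulrA; congr (_ * _); rewrite mulrA mulfV // mul1r.
apply: eq_bigr => j _.
by rewrite horner_adj_char_poly_mx [const_mx 1 _ _]mxE mulr1.
Qed.

Lemma horner_ge0_right (p : {poly R}) s :
  (forall u, s < u -> 0 <= p.[u]) -> 0 <= p.[s].
Proof.
move=> p_ge0; rewrite leNgt; apply/negP => ps.
have p_s := cvg_at_right_filter (@continuous_horner R p s).
have p_lt0 : \forall u \near s^'+, p.[u] < 0 := cvgr_lt _ p_s 0 ps.
have [u [pu su]] :=
  filter_ex (filterI (p_lt0 (at_right_proper_filter s)) (nbhs_right_gt s)).
by have := p_ge0 u su; rewrite leNgt pu.
Qed.

Lemma resolvent1_ge0_limit m (B : 'M[R]_m) s :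
  (forall i j, 0 <= B i j) -> (forall u, s <= u -> \det (u%:M - B) != 0) ->
  (forall u, s < u -> strictly_subinvariant B u) ->
  forall i, 0 <= resolvent1 B s i 0.
Proof.
move=> B0 det_neq0 subinv i.
have numer_ge0 u : s < u -> 0 <= (resolvent1_numer B i).[u].
  move=> su; rewrite horner_resolvent1_numer ?det_neq0 ?(ltW su) //.
  rewrite mulr_ge0 ?sqr_ge0 //.
  apply: (subinvariant_ge0 B0 (subinv u su)) => k.
  by rewrite mulmx_resolvent1 ?det_neq0 ?(ltW su) // gerBl.
have := horner_ge0_right numer_ge0.
rewrite horner_resolvent1_numer ?det_neq0 // pmulr_rge0 //.
by rewrite exprn_even_gt0 //= det_neq0.
Qed.

Lemma strictly_subinvariant_below n (B : 'M[R]_n.+1) s :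
  (forall i j, 0 <= B i j) -> \det (s%:M - B) != 0 ->
  (forall i, 0 <= resolvent1 B s i 0) ->
  exists2 t, t < s & strictly_subinvariant B t.
Proof.
move=> B0 det_neq0 y_ge0; set y := resolvent1 B s in y_ge0 *.
have By i : (B *m y) i 0 = s * y i 0 - 1 by apply: mulmx_resolvent1.
have y_gt0 i : 0 < y i 0.
  rewrite lt_def y_ge0 andbT; apply/negP => /eqP y_i.
  by have := mulmx_ge0 i B0 y_ge0; rewrite By y_i mulr0 sub0r oppr_ge0 ler10.
have [j Hj] := exists_argmax ord0 (fun k => y k 0).
have d_gt0 : 0 < (2 * y j 0)^-1 by rewrite invr_gt0 mulr_gt0.
exists (s - (2 * y j 0)^-1); first by rewrite gtrBl.
exists y => // i; rewrite By mulrBl ltrD2l ltrN2.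
apply: (le_lt_trans (y := (2 * y j 0)^-1 * y j 0)); first by rewrite ler_pM2l.
by rewrite invfM -mulrA mulVf ?gt_eqF // mulr1 invf_lt1 // ltr1n.
Qed.

Lemma strictly_subinvariant_gt_eigenvalues n (B : 'M[R]_n.+1) mu t :
  (forall i j, 0 <= B i j) -> (forall a, eigenvalue B a -> a <= mu) ->
  mu < t -> strictly_subinvariant B t.
Proof.
move=> B0 ev_le mu_t; apply: contrapT => not_t.
pose E : set R := strictly_subinvariant B.
have E_lb : has_lbound E.
  by exists 0 => u /(strictly_subinvariant_gt0 B0)/ltW.
have E_inf : has_inf E.
  split=> //; exists (1 + \sum_i \sum_j B i j).
  exact: strictly_subinvariant_entry_sum.
have t_le_inf : t <= inf E.
  apply: lb_le_inf => [|u Eu]; first by case: E_inf.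
  rewrite leNgt; apply/negP => ut.
  exact/not_t/(strictly_subinvariant_le Eu)/ltW.
have E_gt_inf u : inf E < u -> E u.
  move=> su; have [e Ee] := inf_adherent (eqbRL (subr_gt0 _ u) su) E_inf.
  by rewrite addrC subrK => eu; apply: strictly_subinvariant_le Ee (ltW eu).
have det_neq0 u : inf E <= u -> \det (u%:M - B) != 0.
  move=> su; apply: contraTN (lt_le_trans mu_t (le_trans t_le_inf su)).
  by rewrite -eigenvalue_det -leNgt; apply: ev_le.
have [t' t'_lt Et'] := strictly_subinvariant_below B0 (det_neq0 _ (lexx _))
  (resolvent1_ge0_limit B0 det_neq0 E_gt_inf).
by have := ge_inf E_lb Et'; rewrite leNgt t'_lt.
Qed.

Lemma growth_rate_lt_eigenvalue_bound n (B : 'M[R]_n.+1) mu t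
    (v : 'cV[R]_n.+1) :
  (forall i j, 0 <= B i j) -> (forall a, eigenvalue B a -> a <= mu) ->
  (forall i, 0 < v i 0) -> (forall i, t * v i 0 < (B *m v) i 0) -> t < mu.
Proof.
move=> B0 ev_le v_gt0 Bv; rewrite ltNge; apply/negP => mu_le_t.
have [j Hj] := exists_argmin ord0 (fun i => (B *m v) i 0 / v i 0).
set c := (B *m v) j 0 / v j 0 in Hj.
have t_lt_c : t < c by rewrite ltr_pdivlMr.
have Bv_ge i : c * v i 0 <= (B *m v) i 0 by rewrite -ler_pdivlMr.
have /(strictly_subinvariant_gt_eigenvalues B0 ev_le) subinv : mu < (t + c) / 2.
  by apply: le_lt_trans mu_le_t _; lra.
suff /(_ j) : forall i, 0 <= (- v) i 0 by rewrite mxE oppr_ge0 leNgt v_gt0.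
apply: (subinvariant_ge0 B0 subinv) => i.
rewrite mulmxN [X in X <= _]mxE [(- v) _ _]mxE mulrN lerN2.
by apply: le_trans (Bv_ge i); rewrite ler_pM2r //; lra.
Qed.

End NonnegativeMatrices.

Lemma series_lim_gt0 (R : realType) (u : nat -> R) d :
  (forall k, 0 <= u k) -> 0 < u d -> cvgn (series u) -> 0 < limn (series u).
Proof.
move=> u_ge0 ud cu.
have nd : nondecreasing_seq (series u).
  by apply/nondecreasing_seqP => k; rewrite seriesSr lerDl.
apply: lt_le_trans (nondecreasing_cvgn_le nd cu d.+1).
by rewrite seriesSr ltr_wpDl // seriesEord sumr_ge0.
Qed.

Lemma perron_root_ge_eigenvalue (R : realType) n (A : 'M[R]_n.+1) mu :
  perron_root A mu -> forall a, eigenvalue A a -> a <= mu.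
Proof.
move=> [_ mu_ge] a ea.
have /mu_ge : eigenvalue (map_mx (real_complex R) A) (real_complex R a).
  by rewrite eigenvalue_map.
rewrite normc_def /= expr0n /= addr0 sqrtr_sqr lecR.
exact/le_trans/ler_norm.
Qed.

Lemma small_seed_diffusion_of_growth (R : realType) n (A : 'M[R]_n.+1)
    (w : 'cV[R]_n.+1) :
  (forall i, 0 < w i 0) -> (forall i, w i 0 < (A *m w) i 0) ->
  small_seed_diffusion A.
Proof.
move=> w_gt0 Aw eps eps_gt0.
have [j Hj] := exists_argmax ord0 (fun i => w i 0).
set sc := eps / (2 * w j 0).
have sc_gt0 : 0 < sc by rewrite divr_gt0 ?mulr_gt0.
have scaleE (y : 'cV[R]_n.+1) k : (sc *: y) k 0 = sc * y k 0 by rewrite mxE.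
exists (sc *: w) => i; rewrite -scalemxAr !scaleE.
split; [exact: mulr_gt0 | split; last by rewrite ltr_pM2l].
apply: le_lt_trans (ler_wpM2l (ltW sc_gt0) (Hj i)) _.
have := w_gt0 j; rewrite /sc mulrAC ltr_pdivrMr ?mulr_gt0 // ltr_pM2l //; lra.
Qed.

Section AdoptionRates.
Variables (R : realType) (m : nat) (P w : 'I_m -> nat -> R).
Variables (f g : 'I_m -> nat -> nat -> R).
Hypothesis HP0 : forall i d, 0 <= P i d.
Hypothesis Hw : forall i d, 0 < P i d -> 0 < w i d.
Hypothesis Hf0 : forall i d, f i d 0%N = 0.
Hypothesis Hfmono :
  forall i d a b, (a <= b)%N -> (b <= d)%N -> f i d a <= f i d b.
Hypothesis Hg0 : forall i d, 0 < g i d 0%N.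

Lemma x_term_ge0 i d : 0 <= x_term P w f g i d.
Proof.
rewrite /x_term; case: d => [|d]; first by rewrite mulr0 !mul0r.
have [->|P_neq0] := eqVneq (P i d.+1) 0; first by rewrite !mul0r.
have P_gt0 : 0 < P i d.+1 by rewrite lt_def P_neq0 HP0.
rewrite divr_ge0 ?mulr_ge0 ?ler0n ?(ltW (Hw P_gt0)) ?(ltW (Hg0 i _)) //.
by rewrite -(Hf0 i d.+1) Hfmono.
Qed.

Lemma x_val_gt0 :
  (forall i, exists d, (1 <= d)%N /\ 0 < P i d /\ 0 < f i d 1%N) ->
  (forall i, cvgn (series (x_term P w f g i))) ->
  forall i, 0 < x_val P w f g i.
Proof.
move=> Hf1 Hx i; have [d [d_ge1 [P_gt0 f_gt0]]] := Hf1 i.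
apply: (series_lim_gt0 (d := d) (@x_term_ge0 i) _ (Hx i)).
by rewrite /x_term !mulr_gt0 ?invr_gt0 ?Hw ?Hg0 ?ltr0n.
Qed.

End AdoptionRates.

Theorem theorem3 (R : realType) (n : nat)
  (Pi : 'M[R]_n.+1)
  (P w : 'I_n.+1 -> nat -> R)
  (f g : 'I_n.+1 -> nat -> nat -> R)
  (HPi0 : forall i j, 0 <= Pi i j)
  (HPi1 : forall i, \sum_j Pi i j = 1)
  (HPiprim : exists k : nat, forall i j, 0 < (Pi ^+ k) i j)
  (HP0 : forall i d, 0 <= P i d)
  (HP1 : forall i, cvgn (series (P i)) /\ limn (series (P i)) = 1)
  (Hw : forall i d, 0 < P i d -> 0 < w i d)
  (Hf0 : forall i d, f i d 0%N = 0)
  (Hfmono : forall i d a b, (a <= b)%N -> (b <= d)%N -> f i d a <= f i d b)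
  (Hf1 : forall i, exists d, (1 <= d)%N /\ 0 < P i d /\ 0 < f i d 1%N)
  (Hg0 : forall i d, 0 < g i d 0%N)
  (Hgmono : forall i d a b, (a <= b)%N -> (b <= d)%N -> g i d b <= g i d a)
  (Hx : forall i, cvgn (series (x_term P w f g i)))
  (mu : R)
  (Hmu : perron_root (A_mat Pi (x_val P w f g)) mu) :
  small_seed_diffusion (A_mat Pi (x_val P w f g)) <-> 1 < mu.
Proof.
set x := x_val P w f g; set A := A_mat Pi x.
have x_gt0 : forall j, 0 < x j := x_val_gt0 HP0 Hw Hf0 Hfmono Hg0 Hf1 Hx.
have AE i j : A i j = Pi i j * x j by rewrite mxE.
have A_ge0 i j : 0 <= A i j by rewrite AE mulr_ge0 // ltW.
have ev_le := perron_root_ge_eigenvalue Hmu.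
split=> [diffusion | mu_gt1].
  have [v v_growth] := diffusion 1 ltr01.
  apply: (growth_rate_lt_eigenvalue_bound A_ge0 ev_le (v := v)) => i.
    by case: (v_growth i).
  by rewrite mul1r; case: (v_growth i) => _ [].
have [j0 x_min] := exists_argmin ord0 x.
have [k Pik_gt0] := HPiprim.
have Ak_gt0 : forall i j, 0 < (A ^+ k) i j.
  apply: (mxpow_gt0_of_ge_scale HPi0 (x_gt0 j0)) Pik_gt0 => i j.
  by rewrite AE mulrC ler_wpM2l.
have [y y_gt0 Ay] :=
  pos_supereigenvector A_ge0 Ak_gt0 Hmu.1 (ltW (lt_trans ltr01 mu_gt1)).
apply: (small_seed_diffusion_of_growth y_gt0) => i.
by apply: lt_le_trans (Ay i); rewrite ltr_pMl.
Qed.
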